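(* Assume $\mathrm{recc}(C)\subseteq\mathrm{recc}(P^B)$ and fix $k\in N_2$. If $N_0\subseteq J$, then there exists $\epsilon>0$ such that $\bar x+\epsilon\bar r^j\in S_k^C$ for all $j\in N$.
   Context: Let $A\in\mathbb{R}^{m\times n}$ have full row rank, $b\in\mathbb{R}^m$, and $P=\{x\in\mathbb{R}^n_+:Ax=b\}$. Let $C\subseteq\mathbb{R}^n$ be an open convex set. Fix a basis $B$ of $P$ with nonbasic set $N=\{1,\dots,n\}\setminus B$. Write $P=\{x:x_i=\bar b_i-\sum_{j\in N}\bar a_{ij}x_j\ (i\in B),\ x\ge0\}$ with $\bar b\ge0$. The basic solution $\bar x$ has $\bar x_i=\bar b_i$ ($i\in B$) and $0$ ($i\in N$). $P^B$ is obtained by dropping $x_i\ge0$ for $i\in B$. For $j\in N$, $\bar r^j$ has $\bar r^j_k=-\bar a_{kj}$ ($k\in B$), $\bar r^j_j=1$, and $0$ otherwise. Thus $P^B=\{\bar x+\sum_{j\in N}x_j\bar r^j:x_j\ge0\}$. It is assumed that $\bar x\notin\mathrm{cl}(C)$. For $j\in N$, $\alpha_j=\inf\{\lambda\ge0:\bar x+\lambda\bar r^j\in C\}$ and $\beta_j=\sup\{\lambda\ge0:\bar x+\lambda\bar r^j\in C\}$, with $\alpha_j=+\infty$, $\beta_j=-\infty$ if the halfline misses $C$. The set $N$ is partitioned into - $N_0=\{j:\alpha_j=+\infty,\beta_j=-\infty\}$, - $N_1=\{j:\alpha_j\in(0,\infty),\beta_j=+\infty\}$, - $N_2=\{j:\alpha_j\in(0,\infty),\beta_j\in(\alpha_j,\infty)\}$.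 For a set $K$, $\mathrm{recc}(K)=\{d:x+\lambda d\in K\ \forall x\in K,\lambda\ge0\}$. For $k\in N_2$, $S_k^C=\{\bar x\}+\mathrm{conv}\big(\bigcup_{j\in N_2}\{\lambda\bar r^j:0\le\lambda<\beta_j\}\big)+\{\lambda\bar r^k:\lambda\le0\}+\mathrm{recc}(C)$, and $J=\{i\in N:\bar r^i\in\mathrm{recc}(S_k^C)\}$. *)

From HB Require Import structures.
From mathcomp Require Import all_boot all_order all_algebra.
From mathcomp Require Import all_classical all_reals all_analysis.
Set Implicit Arguments. Unset Strict Implicit. Unset Printing Implicit Defensive.
Import Order.TTheory GRing.Theory Num.Theory.
Import numFieldNormedType.Exports.
Local Open Scope classical_set_scope.
Local Open Scope ring_scope.

Section LPDefs.
Variables (R : realType) (m n : nat).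

Definition recc (K : set 'cV[R]_n) : set 'cV[R]_n :=
  [set d | forall x, K x -> forall l : R, 0 <= l -> K (x + l *: d)].

Definition conv_hull (S : set 'cV[R]_n) : set 'cV[R]_n :=
  \bigcap_(K in [set K : set 'cV[R]_n | convex_set (K : set (convex_lmodType 'cV[R]_n)) /\ S `<=` K]) K.

Definition msum (X Y : set 'cV[R]_n) : set 'cV[R]_n :=
  [set x + y | x in X & y in Y].

Definition polyP (A : 'M[R]_(m, n)) (b : 'cV[R]_m) : set 'cV[R]_n :=
  [set x | A *m x = b /\ forall i, 0 <= x i 0].

(* An ordered basis is an injective f : 'I_m -> 'I_n whose columns of A
   form an invertible matrix; B is its image. *)
Definition basis_mx (A : 'M[R]_(m, n)) (f : 'I_m -> 'I_n) : 'M[R]_m :=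
  colsub f A.

Definition Bset (f : 'I_m -> 'I_n) : {set 'I_n} := [set f l | l : 'I_m].

(* bbar = A_B^{-1} b,  Abar = A_B^{-1} A  (entry (l,j) is abar_{f l, j}) *)
Definition bbar (A : 'M[R]_(m, n)) (b : 'cV[R]_m) f : 'cV[R]_m :=
  invmx (basis_mx A f) *m b.
Definition Abar (A : 'M[R]_(m, n)) f : 'M[R]_(m, n) :=
  invmx (basis_mx A f) *m A.

Definition xbar (A : 'M[R]_(m, n)) (b : 'cV[R]_m) f : 'cV[R]_n :=
  \col_(i < n) (if [pick l | f l == i] is Some l then bbar A b f l 0 else 0).

Definition rbar (A : 'M[R]_(m, n)) f (j : 'I_n) : 'cV[R]_n :=
  \col_(k < n) (if [pick l | f l == k] is Some l then - Abar A f l j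
                else if k == j then 1 else 0).

Definition polyPB (A : 'M[R]_(m, n)) (b : 'cV[R]_m) f : set 'cV[R]_n :=
  [set x | A *m x = b /\ forall i, i \notin Bset f -> 0 <= x i 0].

Definition hl_params (A : 'M[R]_(m, n)) (b : 'cV[R]_m) f (C : set 'cV[R]_n) j
  : set R := [set l | 0 <= l /\ C (xbar A b f + l *: rbar A f j)].

(* alpha_j = inf, beta_j = sup; ereal_inf set0 = +oo, ereal_sup set0 = -oo *)
Definition alpha A b f C j : \bar R :=
  ereal_inf [set l%:E | l in hl_params A b f C j].
Definition beta A b f C j : \bar R :=
  ereal_sup [set l%:E | l in hl_params A b f C j].

Local Open Scope ereal_scope.
Definition N0 A b f C : set 'I_n :=
  [set j | j \notin Bset f /\ alpha A b f C j = +oo /\ beta A b f C j = -oo].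
Definition N1 A b f C : set 'I_n :=
  [set j | j \notin Bset f /\ 0 < alpha A b f C j < +oo /\ beta A b f C j = +oo].
Definition N2 A b f C : set 'I_n :=
  [set j | j \notin Bset f /\ 0 < alpha A b f C j < +oo /\
           alpha A b f C j < beta A b f C j < +oo].
Local Close Scope ereal_scope.

Definition SkC A b f (C : set 'cV[R]_n) (k : 'I_n) : set 'cV[R]_n :=
  msum (msum (msum [set xbar A b f]
    (conv_hull (\bigcup_(j in N2 A b f C)
        [set l *: rbar A f j | l in [set l : R | 0 <= l /\ (l%:E < beta A b f C j)%E]])))
    [set l *: rbar A f k | l in [set l : R | l <= 0]])
    (recc C).

Definition Jset A b f C k : set 'I_n :=
  [set i | i \notin Bset f /\ recc (SkC A b f C k) (rbar A f i)].

End LPDefs.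

(* Every nonbasic halfline xbar + lambda rbar^j falls in one of three cases.
   If it misses C, then j is in N0, hence in J, so rbar^j recedes from S_k^C,
   which contains xbar.  If it meets C in an unbounded set, then rbar^j lies in
   recc C (C is open and convex), and recc C is part of recc S_k^C.  Otherwise
   xbar is not in the closure of C and C is open, so 0 < alpha_j < beta_j < oo,
   i.e. j is in N2, and xbar + lambda rbar^j lies in the hull part of S_k^C for
   0 <= lambda <= alpha_j.  In each case all small eps > 0 work, and there are
   finitely many j.  Only openness and convexity of C and xbar not in cl(C) are
   used. *)

From HB Require Import structures.
From mathcomp Require Import all_boot all_order all_algebra.
From mathcomp Require Import all_classical all_reals all_analysis.
From mathcomp Require Import ring lra.
Import Order.TTheory GRing.Theory Num.Theory.
Import numFieldNormedType.Exports.
Local Open Scope classical_set_scope.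
Local Open Scope ring_scope.

Lemma nbhs_line (R : realType) (V : normedModType R) (x v : V) (P : set V) :
  nbhs x P -> exists2 e : R, 0 < e & forall s, `|s| < e -> P (x + s *: v).
Proof.
move=> /nbhs_ballP [e /= e0 xeP].
have v1 : 0 < `|v| + 1 by apply: ltr_wpDl.
exists (e / (`|v| + 1)); first exact: divr_gt0.
move=> s; rewrite ltr_pdivlMr // => se; apply: xeP.
rewrite -ball_normE /= opprD addrA subrr add0r normrN normrZ.
by apply: le_lt_trans se; rewrite ler_wpM2l // lerDl.
Qed.
Arguments nbhs_line {R V x} v {P}.

Lemma convex_set_comb (R : realType) (M : lmodType R)
    (C : set (convex_lmodType M)) (x y : M) (t : R) :
  convex_set C -> C x -> C y -> 0 <= t -> t <= 1 -> C (t *: x + (1 - t) *: y).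
Proof.
move=> cC Cx Cy t0 t1.
by have := cC x y (Itv01 t0 t1) (mem_set Cx) (mem_set Cy); rewrite inE.
Qed.
Arguments convex_set_comb {R M C x y t}.

Lemma notin_closure_ray_ge (R : realType) (V : normedModType R)
    (C : set V) (x0 r : V) :
  ~ closure C x0 ->
  exists2 c : R, 0 < c & forall l, 0 <= l -> C (x0 + l *: r) -> c <= l.
Proof.
move=> x0C; have [B [x0B CB0]] : exists B, nbhs x0 B /\ ~ (C `&` B !=set0).
  apply: contrapT => noB; apply: x0C => B x0B; apply: contrapT => CB0.
  by apply: noB; exists B.
have [c c0 cB] := nbhs_line r x0B.
exists c => // l l0 Cl; rewrite leNgt; apply/negP => lc.
by apply: CB0; exists (x0 + l *: r); split => //; apply: cB; rewrite ger0_norm.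
Qed.
Arguments notin_closure_ray_ge {R V C x0} r.

Lemma open_ray_extend (R : realType) (V : normedModType R)
    (C : set V) (x0 r : V) (l : R) :
  open C -> C (x0 + l *: r) -> exists2 l', l < l' & C (x0 + l' *: r).
Proof.
move=> oC Cl; have [d d0 dC] := nbhs_line r (open_nbhs_nbhs (conj oC Cl)).
exists (l + d / 2); first by lra.
by rewrite scalerDl addrA; apply: dC; rewrite ger0_norm; lra.
Qed.
Arguments open_ray_extend {R V C x0 r l}.

Section Recession.
Context {R : realType} {n : nat}.
Implicit Types (C : set 'cV[R]_n) (x r d : 'cV[R]_n).

Lemma recc0 C : recc C 0.
Proof. by move=> x Cx l _; rewrite scaler0 addr0. Qed.

Lemma reccZ C d (a : R) : recc C d -> 0 <= a -> recc C (a *: d).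
Proof.
by move=> Cd a0 x Cx l l0; rewrite scalerA; apply: Cd => //; apply: mulr_ge0.
Qed.

Lemma reccD C c d : recc C c -> recc C d -> recc C (c + d).
Proof.
by move=> Cc Cd x Cx l l0; rewrite scalerDr addrA; apply: Cd => //; apply: Cc.
Qed.

(* [x + l r = (1 - l/lam) w + (l/lam) (x0 + lam r)] with
   [w = x + s (x - x0)] and [s = l / (lam - l)]; for large [lam], [w] is so
   close to [x] that it lies in the open set [C]. *)
Lemma open_convex_unbounded_ray_recc C x0 r :
  open C -> convex_set (C : set (convex_lmodType 'cV[R]_n)) ->
  (forall M, exists2 lam, M < lam & C (x0 + lam *: r)) -> recc C r.
Proof.
move=> oC cC unb x Cx l; rewrite le_eqVlt => /predU1P [<-|l0].
  by rewrite scale0r addr0.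
have [e e0 xeC] := nbhs_line (x - x0) (open_nbhs_nbhs (conj oC Cx)).
have [lam lam_big Clam] := unb (l + l / e).
have le0 : 0 < l / e by apply: divr_gt0.
have llam : l < lam by lra.
set s := l / (lam - l).
have Cw : C (x + s *: (x - x0)).
  apply: xeC; rewrite ger0_norm; last by apply: divr_ge0; lra.
  rewrite ltr_pdivrMr; last by lra.
  by rewrite mulrC -ltr_pdivrMr //; lra.
have := convex_set_comb cC Cw Clam (_ : 0 <= 1 - l / lam) (_ : 1 - l / lam <= 1).
have -> : (1 - l / lam) *: (x + s *: (x - x0)) + (1 - (1 - l / lam)) *: (x0 + lam *: r)
    = x + l *: r.
  by apply/matrixP => i j; rewrite !mxE /s; field; lra.
apply.
- by rewrite subr_ge0 ler_pdivrMr; lra.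
- by rewrite lerBlDr lerDl; apply: divr_ge0; lra.
Qed.

End Recession.

Section Halflines.
Context {R : realType} {m n : nat}.
Context {A : 'M[R]_(m, n)} {b : 'cV[R]_m} {f : 'I_m -> 'I_n}.
Context {C : set 'cV[R]_n} {k : 'I_n}.

Local Notation xb := (xbar A b f).
Local Notation rb := (rbar A f).
Local Notation ray j := (hl_params A b f C j).

Lemma N0_of_ray_empty j : j \notin Bset f -> ray j = set0 -> N0 A b f C j.
Proof.
move=> jB ray0; split => //.
by rewrite /alpha /beta ray0 image_set0 ereal_inf0 ereal_sup0.
Qed.

Lemma N2_of_ray_bounded j l0 M :
  open C -> ~ closure C xb -> j \notin Bset f ->
  ray j l0 -> (forall l, ray j l -> l <= M) -> N2 A b f C j.
Proof.
move=> oC xbC jB [l00 Cl0] rayM.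
have [c c0 gec] := notin_closure_ray_ge (rb j) xbC.
have [l1 l01 Cl1] := open_ray_extend oC Cl0.
have alpha_ge : (c%:E <= alpha A b f C j)%E.
  by apply: le_ereal_inf_tmp => _ [l [l_ge0 Cl] <-]; rewrite lee_fin; apply: gec.
have alpha_le : (alpha A b f C j <= l0%:E)%E.
  by apply: ereal_inf_lbound; exists l0.
have beta_ge : (l1%:E <= beta A b f C j)%E.
  by apply: ereal_sup_ubound; exists l1 => //; split => //; lra.
have beta_le : (beta A b f C j <= M%:E)%E.
  by apply: ge_ereal_sup => _ [l rayl <-]; rewrite lee_fin; apply: rayM.
split => //; split; apply/andP; split.
- by apply: lt_le_trans alpha_ge; rewrite lte_fin.
- exact: le_lt_trans alpha_le (ltry _).
- by apply: (le_lt_trans alpha_le); apply: lt_le_trans beta_ge; rewrite lte_fin.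
- exact: le_lt_trans beta_le (ltry _).
Qed.

Lemma ray_trichotomy j :
  open C -> convex_set (C : set (convex_lmodType 'cV[R]_n)) -> ~ closure C xb ->
  j \notin Bset f -> [\/ N0 A b f C j, recc C (rb j) | N2 A b f C j].
Proof.
move=> oC cC xbC jB.
have [ray0|/eqP/set0P [l0 rayl0]] := pselect (ray j = set0).
  by apply: Or31; apply: N0_of_ray_empty.
have [unb|bdd] := pselect (forall M, exists2 lam, M < lam & C (xb + lam *: rb j)).
  by apply: Or32; apply: open_convex_unbounded_ray_recc unb.
have [M rayM] : exists M, forall l, ray j l -> l <= M.
  apply: contrapT => nobound; apply: bdd => M; apply: contrapT => noM.
  apply: nobound; exists M => l [_ Cl]; rewrite leNgt; apply/negP => Ml.
  by apply: noM; exists l.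
by apply: Or33; apply: N2_of_ray_bounded rayl0 rayM.
Qed.

Lemma mem_SkC j l c :
  N2 A b f C j -> 0 <= l -> (l%:E < beta A b f C j)%E -> recc C c ->
  SkC A b f C k (xb + l *: rb j + c).
Proof.
move=> N2j l0 lbeta Cc.
exists (xb + l *: rb j + 0 *: rb k); last by exists c => //; rewrite scale0r addr0.
exists (xb + l *: rb j); last by exists (0 *: rb k) => //; exists 0 => /=.
exists xb => //; exists (l *: rb j) => //.
by move=> K [_ sub]; apply: sub; exists j => //; exists l.
Qed.

Lemma xbar_SkC : N2 A b f C k -> SkC A b f C k xb.
Proof.
move=> N2k; have [_ [/andP [a0 _] /andP [ab _]]] := N2k.
have := @mem_SkC k 0 0 N2k (lexx 0) (lt_trans a0 ab) (recc0 C).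
by rewrite scale0r !addr0.
Qed.

Lemma recc_SkC {d} : recc C d -> recc (SkC A b f C k) d.
Proof.
move=> Cd _ [y Sy [c Cc <-]] l l0.
exists y => //; exists (c + l *: d); last by rewrite addrA.
by apply: reccD => //; apply: reccZ.
Qed.

Lemma SkC_near_N2 j :
  N2 A b f C j -> \forall e \near 0^'+, SkC A b f C k (xb + e *: rb j).
Proof.
move=> N2j; have [_ [/andP [a0 aoo] /andP [ab _]]] := N2j.
move: a0 aoo ab; case: (alpha A b f C j) => [a||] //; rewrite lte_fin => a0 _ ab.
near=> e; rewrite -[_ + _]addr0; apply: mem_SkC N2j _ _ (recc0 C).
- by near: e; exact: nbhs_right_ge.
- by apply: le_lt_trans ab; rewrite lee_fin; near: e; exact: nbhs_right_le.
Unshelve. all: by end_near.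
Qed.

Lemma SkC_near_recc {d} :
  N2 A b f C k -> recc (SkC A b f C k) d ->
  \forall e \near 0^'+, SkC A b f C k (xb + e *: d).
Proof.
move=> N2k Sd; near=> e; apply: Sd (xbar_SkC N2k) _ _.
by near: e; exact: nbhs_right_ge.
Unshelve. all: by end_near.
Qed.

End Halflines.

Theorem corollary2 (R : realType) (m n : nat)
  (A : 'M[R]_(m, n)) (b : 'cV[R]_m) (f : 'I_m -> 'I_n)
  (C : set 'cV[R]_n) (k : 'I_n) :
  \rank A = m ->
  injective f ->
  basis_mx A f \in unitmx ->
  (forall l, 0 <= bbar A b f l 0) ->
  open C ->
  convex_set (C : set (convex_lmodType 'cV[R]_n)) ->
  ~ closure C (xbar A b f) ->
  recc C `<=` recc (polyPB A b f) ->
  N2 A b f C k ->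
  N0 A b f C `<=` Jset A b f C k ->
  exists2 eps : R, 0 < eps &
    forall j : 'I_n, j \notin Bset f -> SkC A b f C k (xbar A b f + eps *: rbar A f j).
Proof.
move=> _ _ _ _ oC cC xbC _ N2k N0J.
suff: \forall e \near 0^'+, forall j, j \notin Bset f ->
    SkC A b f C k (xbar A b f + e *: rbar A f j).
  by move=> /(filterI (nbhs_right_gt 0)) /filter_ex [e [e0 Se]]; exists e.
apply: filter_forall => j; have /orP [jB|jB] := orbN (j \in Bset f).
  by near=> e; rewrite jB.
near=> e => _; near: e.
have [N0j|reccj|N2j] := ray_trichotomy j oC cC xbC jB.
- by have [_ Sj] := N0J j N0j; exact: SkC_near_recc N2k Sj.
- exact: SkC_near_recc N2k (recc_SkC reccj).
- exact: SkC_near_N2.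
Unshelve. all: by end_near.
Qed.
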